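(* Let $\Phi$ be an atomic CSP and $\pi$ an admissible projection scheme. Let $(X_t,Y_t)_{t\ge0}$ be the optimal one-step coupling of two copies of the Glauber dynamics for $\mu_\pi$ with arbitrary initial states $X_0,Y_0$. If $(v,t)\in U\cap D$, then there exists a path $C^1,C^2,\dots,C^k$ in $G(\mathcal{C})$ such that: $v\in\mathrm{vbl}(C^1)$; each $C^i$ is not satisfied in at least one of $X_{t-1}^{-v}$ and $Y_{t-1}^{-v}$; and $\mathrm{vbl}(C^k)$ contains some $u\neq v$ with $X_{t-1}(u)\neq Y_{t-1}(u)$.
   Context: CSP notation: $\Phi=(V,(\Omega_v),\mathcal{C})$, constraints depending only on $\mathrm{vbl}(C)$; atomic: each $C$ has a unique violating assignment $\boldsymbol{C}\in\prod_{v\in\mathrm{vbl}(C)}\Omega_v$; degree $\Delta=\max_C|\{C':\mathrm{vbl}(C)\cap\mathrm{vbl}(C')\ne\emptyset\}|$; $\mu_\Phi$ uniform on satisfying assignments. Projection scheme $\pi_v:\Omega_v\to Q_v$ ($Q_v$ finite, nonempty); $\mathbb{P}_\pi,\mu_\pi$ pushforwards under $\pi$ of the uniform distribution on $\prod_v\Omega_v$ and of $\mu_\Phi$; $\boldsymbol{C}_\pi(v)=\pi_v(\boldsymbol{C}(v))$; $b(C)=\prod_{u\in\mathrm{vbl}(C)}|\pi_u^{-1}(\boldsymbol{C}_\pi(u))|^{-1}$, $b=\max_Cb(C)$; $q_{\mathrm{TV}}=\max_{v,Y}d_{\mathrm{TV}}(\mathbb{P}_\pi[\mathrm{value}(v)=\cdot],\mu_\pi[\mathrm{value}(v)=\cdot\mid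 Y^{-v}])$ where $Y^{-v}$ is $Y$ with coordinate $v$ removed and the conditioning is on the other coordinates; $\overline{\mathrm{vbl}}(C)=\{v\in\mathrm{vbl}(C):|Q_v|>1\}$; $\zeta(C)=\max\{1,\max_{v\in\overline{\mathrm{vbl}}(C)}\min(\frac{(1-3b)^\Delta q_{\mathrm{TV}}}{\mathbb{P}_\pi[\mathrm{value}(v)=\boldsymbol{C}_\pi(v)]},2\Delta)\}$. Admissible (parameter $\eta\in(0,1/2)$): (A1) $b\le\eta/(300\Delta)$; (A2) there is $\kappa\ge4\log(3000\Delta)$, $\kappa\le K(\log\Delta+\log\max|Q_v|+\log\max|\mathrm{vbl}(C)|)$ ($K$ universal) with $|\overline{\mathrm{vbl}}(C)|^2\kappa^2\zeta(C)\prod_{v\in\overline{\mathrm{vbl}}(C)}((1-3b)^{-\Delta}\mathbb{P}_\pi[\mathrm{value}(v)=\boldsymbol{C}_\pi(v)]+e^{-\kappa/3})\le(60000\Delta)^{-2}$ for all $C$; (A3) for $v\in\mathrm{vbl}(C)\cap\mathrm{vbl}(C')$, $\frac12\mathbb{P}_\pi[\mathrm{value}(v)=\boldsymbol{C}_\pi(v)]\le\mathbb{P}_\pi[\mathrm{value}(v)=\boldsymbol{C}'_\pi(v)]\le2\mathbb{P}_\pi[\mathrm{value}(v)=\boldsymbol{C}_\pi(v)]$; (A4) $\pi_v$ computable and fibres samplable in time $K\log|\Omega_v|$. $G(\mathcal{C})$ is the graph on $\mathcal{C}$ with $C\ne C'$ adjacent iff $\mathrm{vbl}(C)\cap\mathrm{vbl}(C')\ne\emptyset$;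 a path is a sequence of constraints with consecutive ones adjacent. A partial assignment $Z$ (defined on a subset of $V$) does not satisfy $C$ if $Z(w)=\boldsymbol{C}_\pi(w)$ for all $w\in\mathrm{vbl}(C)$ at which $Z$ is defined. The optimal one-step coupling: given $(X_{t-1},Y_{t-1})$, choose $v\in V$ uniformly at random ($v$ is ''updated at time $t$''), set $X_t(w)=X_{t-1}(w)$, $Y_t(w)=Y_{t-1}(w)$ for $w\ne v$, and draw $(X_t(v),Y_t(v))$ from an optimal (total-variation-achieving) coupling of $\mu_\pi[\mathrm{value}(v)=\cdot\mid X_{t-1}^{-v}]$ and $\mu_\pi[\mathrm{value}(v)=\cdot\mid Y_{t-1}^{-v}]$. $U=\{(v,t): v\text{ is updated at time }t\}$ and $D=\{(v,t):X_t(v)\ne Y_t(v)\}$. *)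

From HB Require Import structures.
From mathcomp Require Import all_boot all_order all_algebra.
From mathcomp Require Import all_classical all_reals all_analysis.
Set Implicit Arguments. Unset Strict Implicit. Unset Printing Implicit Defensive.
Import Order.TTheory GRing.Theory Num.Theory.
Local Open Scope ring_scope.

Section CSPDefs.
Variable R : realType.
Variable V : finType.
Variable Om : V -> finType.
Variable Q : V -> finType.
Variable pi : forall v, Om v -> Q v.
(* atomic CSP: constraints indexed by I, constraint c has variable set vbl c
   and unique violating assignment (bad c) restricted to vbl c *)
Variable I : finType.
Variable vbl : I -> {set V}.
Variable bad : forall (c : I) (v : V), Om v.

Definition Assign := {dffun forall v : V, Om v}.
Definition PAssign := {dffun forall v : V, Q v}.

Definition viol (c : I) (s : Assign) : bool := [forall w in vbl c, s w == bad c w].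
Definition satb (s : Assign) : bool := [forall c : I, ~~ viol c s].

Definition degree : nat :=
  \max_(c : I) #|[set c' : I | ~~ [disjoint vbl c & vbl c']]|.

Definition fib (v : V) (q : Q v) : nat := #|[set x : Om v | pi x == q]|.

(* P_pi[value(v) = q] under the uniform product distribution *)
Definition Pmarg (v : V) (q : Q v) : R := (fib q)%:R / (#|Om v|)%:R.

Definition Cpi (c : I) (v : V) : Q v := pi (bad c v).

Definition bC (c : I) : R := \prod_(u in vbl c) ((fib (Cpi c u))%:R)^-1.
Definition bmax : R := \big[Num.max/0]_(c : I) bC c.

Definition compat (v : V) (Y : PAssign) (s : Assign) : bool :=
  [forall w, (w != v) ==> (pi (s w) == Y w)].

(* mu_pi[value(v) = a | Y^{-v}], mu_Phi uniform on satisfying assignments *)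
Definition condnum (v : V) (Y : PAssign) (a : Q v) : nat :=
  #|[set s : Assign | [&& satb s, compat v Y s & pi (s v) == a]]|.
Definition condden (v : V) (Y : PAssign) : nat :=
  #|[set s : Assign | satb s && compat v Y s]|.
Definition cond (v : V) (Y : PAssign) (a : Q v) : R :=
  (@condnum v Y a)%:R / (condden v Y)%:R.

Definition dTV (T : finType) (p q : T -> R) : R := 2^-1 * \sum_(a : T) `|p a - q a|.

Definition qTV : R :=
  \big[Num.max/0]_(v : V) \big[Num.max/0]_(Y : PAssign) dTV (@Pmarg v) (@cond v Y).

Definition vblbar (c : I) : {set V} := [set v in vbl c | 1 < #|Q v|]%N.

Definition zeta (c : I) : R :=
  \big[Num.max/1]_(v in vblbar c)
     Num.min ((1 - 3 * bmax) ^+ degree * qTV / Pmarg (Cpi c v)) (2 * degree%:R).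

Definition maxQ : nat := \max_(v : V) #|Q v|.
Definition maxvbl : nat := \max_(c : I) #|vbl c|.

Definition admissible (K eta : R) : Prop :=
  [/\ bmax <= eta / (3 * 10 ^+ 2 * degree%:R),
      exists kappa : R,
        [/\ 4 * ln (3 * 10 ^+ 3 * degree%:R) <= kappa,
            kappa <= K * (ln degree%:R + ln maxQ%:R + ln maxvbl%:R) &
            forall c : I,
              (#|vblbar c|%:R) ^+ 2 * kappa ^+ 2 * zeta c *
              \prod_(v in vblbar c)
                 ((1 - 3 * bmax) ^- degree * Pmarg (Cpi c v) + expR (- (kappa / 3)))
              <= (6 * 10 ^+ 4 * degree%:R) ^- 2]
    & forall (c c' : I) (v : V), v \in vbl c -> v \in vbl c' ->
        Pmarg (Cpi c v) / 2 <= Pmarg (Cpi c' v) <= 2 * Pmarg (Cpi c v)].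

Definition is_opt_coupling (T : finType) (p q : T -> R) (nu : T -> T -> R) : Prop :=
  [/\ forall a b, 0 <= nu a b,
      forall a, \sum_(b : T) nu a b = p a,
      forall b, \sum_(a : T) nu a b = q b &
      \sum_(a : T) \sum_(b : T | b != a) nu a b = dTV p q].

(* a (positive-probability) sample path of the optimal one-step coupling:
   vs t is the variable updated at time t >= 1, X t, Y t the states *)
Definition coupled_run (vs : nat -> V) (X Y : nat -> PAssign) : Prop :=
  forall t : nat, (0 < t)%N ->
    (forall w, w != vs t -> X t w = X t.-1 w /\ Y t w = Y t.-1 w) /\
    exists nu : Q (vs t) -> Q (vs t) -> R,
      is_opt_coupling (@cond (vs t) (X t.-1)) (@cond (vs t) (Y t.-1)) nu /\
      0 < nu (X t (vs t)) (Y t (vs t)).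

Definition not_sat_minus (Z : PAssign) (v : V) (c : I) : bool :=
  [forall w in vbl c, (w != v) ==> (Z w == Cpi c w)].

Definition adjC (c c' : I) : bool := (c != c') && ~~ [disjoint vbl c & vbl c'].

End CSPDefs.

(* Suppose no such path exists and let W consist of v together with every
   variable reachable from v through constraints left unsatisfied by X_{t-1}^{-v}
   or Y_{t-1}^{-v}.  Then X_{t-1} and Y_{t-1} agree on W minus v, and each such
   constraint lies entirely inside or entirely outside W.  Exchanging the values
   on W between a satisfying assignment compatible with X_{t-1}^{-v} and one
   compatible with Y_{t-1}^{-v} therefore yields two satisfying assignments
   compatible the other way round, with the same values at v; this involution
   shows that the two conditional marginals at v coincide.  An optimal coupling
   of equal distributions lives on the diagonal, contradicting X_t(v) <> Y_t(v). *)

From HB Require Import structures.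
From mathcomp Require Import all_boot all_order all_algebra.
From mathcomp Require Import all_classical all_reals all_analysis.
Set Implicit Arguments. Unset Strict Implicit. Unset Printing Implicit Defensive.
Import Order.TTheory GRing.Theory Num.Theory.
Local Open Scope ring_scope.

Section OptimalCoupling.
Variables (R : realType) (T : finType) (p q : T -> R) (nu : T -> T -> R).
Hypothesis nu_opt : is_opt_coupling p q nu.

Lemma opt_coupling_le_marginal_l a b : nu a b <= p a.
Proof.
have [nu_ge0 <- _ _] := nu_opt.
by rewrite (bigD1 b) //= lerDl sumr_ge0.
Qed.

Lemma opt_coupling_le_marginal_r a b : nu a b <= q b.
Proof.
have [nu_ge0 _ <- _] := nu_opt.
by rewrite (bigD1 a) //= lerDl sumr_ge0.
Qed.

Lemma opt_coupling_offdiag_eq0 : p =1 q -> forall a b, a != b -> nu a b = 0.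
Proof.
move=> pq a b ab; have [nu_ge0 _ _ nu_off] := nu_opt.
have dTV0 : dTV p q = 0.
  by rewrite /dTV big1 ?mulr0 // => x _; rewrite pq subrr normr0.
rewrite dTV0 in nu_off.
have row0 := psumr_eq0P (fun x _ => sumr_ge0 _ (fun y _ => nu_ge0 x y)) nu_off.
by apply: (psumr_eq0P (fun y _ => nu_ge0 a y) (row0 a isT)); rewrite eq_sym.
Qed.

End OptimalCoupling.

Section CSP.
Variables (V : finType) (Om Q : V -> finType) (pi : forall v, Om v -> Q v).
Variables (I : finType) (vbl : I -> {set V}) (bad : forall (c : I) (v : V), Om v).

Local Notation unsat := (not_sat_minus pi vbl bad).
Local Notation satb := (satb vbl bad).
Local Notation viol := (viol vbl bad).
Local Notation compat := (compat pi).

Lemma unsat_of_viol (Z : PAssign Q) v s c :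
  compat v Z s -> viol c s -> unsat Z v c.
Proof.
move=> /forallP Zs /forallP sc; apply/forallP => w; apply/implyP => wc.
apply/implyP => wv; have /implyP/(_ wv)/eqP <- := Zs w.
by have /implyP/(_ wc)/eqP -> := sc w.
Qed.

Lemma condden_neq0 R v (Z : PAssign Q) (a : Q v) :
  cond R pi vbl bad Z a != 0 -> condden pi vbl bad v Z != 0%N.
Proof. by apply: contraNneq => den0; rewrite /cond den0 invr0 mulr0. Qed.

Section Mix.
Variable W : {set V}.

Definition mix (s r : Assign Om) : Assign Om :=
  [ffun w => if w \in W then s w else r w].

Definition mix_swap (sr : Assign Om * Assign Om) := (mix sr.1 sr.2, mix sr.2 sr.1).

Lemma mix_swapK : involutive mix_swap.
Proof.
by case=> s r; congr pair; apply/ffunP => w; rewrite !ffunE; case: ifP => ->.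
Qed.

Definition splits_unsat (Z : PAssign Q) v :=
  forall c, unsat Z v c -> (vbl c \subset W) || [disjoint vbl c & W].

Variable v : V.

Lemma compat_mix (Z1 Z2 : PAssign Q) s r :
  {in W :\ v, forall w, Z1 w = Z2 w} ->
  compat v Z1 s -> compat v Z2 r -> compat v Z2 (mix s r).
Proof.
move=> Z12 /forallP Z1s /forallP Z2r; apply/forallP => w; apply/implyP => wv.
rewrite ffunE; case: ifPn => wW; last by have /implyP-> := Z2r w.
by have /implyP/(_ wv)/eqP-> := Z1s w; rewrite Z12 // in_setD1 wv.
Qed.

Lemma satb_mix (Z2 : PAssign Q) s r :
  splits_unsat Z2 v -> compat v Z2 (mix s r) -> satb s -> satb r -> satb (mix s r).
Proof.
move=> split_Z2 Z2m /forallP ss /forallP sr; apply/forallP => c; apply/negP => mc.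
have mix_viol (t : Assign Om) : {in vbl c, forall w, mix s r w = t w} -> viol c t.
  move=> mt; apply/forallP => w; apply/implyP => wc.
  by have /implyP/(_ wc) := forallP mc w; rewrite mt.
case/orP: (split_Z2 c (unsat_of_viol Z2m mc)) => [/fintype.subsetP sub | dis].
  by case/negP: (ss c); apply: mix_viol => w /sub wW; rewrite ffunE wW.
by case/negP: (sr c); apply: mix_viol => w wc; rewrite ffunE (disjointFr dis wc).
Qed.

Lemma condnum_condden_le (Z1 Z2 : PAssign Q) (a : Q v) :
  v \in W -> {in W :\ v, forall w, Z1 w = Z2 w} ->
  splits_unsat Z1 v -> splits_unsat Z2 v ->
  (condnum pi vbl bad Z1 a * condden pi vbl bad v Z2
     <= condnum pi vbl bad Z2 a * condden pi vbl bad v Z1)%N.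
Proof.
move=> vW Z12 split_Z1 split_Z2.
have Z21 : {in W :\ v, forall w, Z2 w = Z1 w} by move=> w /Z12.
rewrite /condnum /condden -!cardsX -(card_imset _ (can_inj mix_swapK)).
apply: subset_leq_card; apply/fintype.subsetP => _ /imsetP[[s r] + ->].
rewrite !inE /= => /andP[/and3P[ss Z1s sa] /andP[sr Z2r]].
have Z2m := compat_mix Z12 Z1s Z2r; have Z1m := compat_mix Z21 Z2r Z1s.
by rewrite (satb_mix split_Z2) ?(satb_mix split_Z1) // Z2m Z1m ffunE vW sa.
Qed.

Lemma cond_eq_of_splits R (Z1 Z2 : PAssign Q) :
  v \in W -> {in W :\ v, forall w, Z1 w = Z2 w} ->
  splits_unsat Z1 v -> splits_unsat Z2 v ->
  condden pi vbl bad v Z1 != 0%N -> condden pi vbl bad v Z2 != 0%N ->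
  forall a : Q v, cond R pi vbl bad Z1 a = cond R pi vbl bad Z2 a.
Proof.
move=> vW Z12 split_Z1 split_Z2 den1 den2 a.
have Z21 : {in W :\ v, forall w, Z2 w = Z1 w} by move=> w /Z12.
apply/eqP; rewrite /cond eqr_div ?pnatr_eq0 // -!natrM eqr_nat eqn_leq.
by rewrite !condnum_condden_le.
Qed.

End Mix.

Section RelevantPaths.
Variables (rel : pred I) (v : V).

Definition rel_path_to (u : V) : Prop := exists (c1 : I) (cs : seq I),
  [/\ path (adjC vbl) c1 cs, v \in vbl c1, all rel (c1 :: cs) & u \in vbl (last c1 cs)].

Definition rel_reach_set : {set V} := [set u | (u == v) || `[< rel_path_to u >]].

Lemma rel_reach_set_id : v \in rel_reach_set.
Proof. by rewrite inE eqxx. Qed.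

Lemma rel_path_to_vbl c u :
  rel c -> u \in vbl c -> u \in rel_reach_set -> {in vbl c, forall x, rel_path_to x}.
Proof.
move=> relc uc; rewrite inE => /orP[/eqP uv | /asboolP[c1 [cs [c1cs vc1 rel_cs ucs]]]] x xc.
  by exists c, [::]; rewrite /= -uv relc.
have [c_last | ccs] := eqVneq c (last c1 cs); first by exists c1, cs; rewrite -c_last.
exists c1, (rcons cs c); split => //; last by rewrite last_rcons.
  rewrite rcons_path c1cs /adjC eq_sym ccs /=.
  by apply/negP => /disjointFr/(_ ucs); rewrite uc.
by rewrite -rcons_cons all_rcons relc.
Qed.

Lemma rel_reach_set_split c :
  rel c -> (vbl c \subset rel_reach_set) || [disjoint vbl c & rel_reach_set].
Proof.
move=> relc; case: (boolP [disjoint vbl c & rel_reach_set]) => [dis|]; first by apply/orP; right.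
rewrite -setI_eq0 => /set0Pn[u]; rewrite inE => /andP[uc uW].
apply/orP; left; apply/fintype.subsetP => x xc.
by rewrite inE; apply/orP; right; apply/asboolP; apply: (rel_path_to_vbl relc uc uW).
Qed.

Lemma rel_reach_set_agree (Z1 Z2 : PAssign Q) :
  ~ (exists (c1 : I) (cs : seq I),
       [/\ path (adjC vbl) c1 cs, v \in vbl c1, all rel (c1 :: cs) &
           exists u, [/\ u \in vbl (last c1 cs), u != v & Z1 u != Z2 u]]) ->
  {in rel_reach_set :\ v, forall w, Z1 w = Z2 w}.
Proof.
move=> no_path w; rewrite !inE => /andP[wv /orP[/eqP wv' | /asboolP[c1 [cs [? ? ? ?]]]]].
  by rewrite wv' eqxx in wv.
apply/eqP/negP => Zw; apply: no_path; exists c1, cs; split => //.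
by exists w; split => //; apply/negP.
Qed.

End RelevantPaths.
End CSP.

Theorem lemma5p4 (R : realType) (V : finType) (Om Q : V -> finType)
    (pi : forall v, Om v -> Q v) (I : finType) (vbl : I -> {set V})
    (bad : forall (c : I) (v : V), Om v) (K eta : R) :
  0 < K -> 0 < eta < 2^-1 ->
  (forall v, (0 < #|Om v|)%N) ->
  admissible pi vbl bad K eta ->
  forall (vs : nat -> V) (X Y : nat -> PAssign Q),
  coupled_run R pi vbl bad vs X Y ->
  forall (v : V) (t : nat), (0 < t)%N -> vs t = v -> X t v != Y t v ->
  exists (c1 : I) (cs : seq I),
    [/\ path (adjC vbl) c1 cs,
        v \in vbl c1,
        all (fun c => not_sat_minus pi vbl bad (X t.-1) v c
                      || not_sat_minus pi vbl bad (Y t.-1) v c) (c1 :: cs) &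
        exists u : V, [/\ u \in vbl (last c1 cs), u != v & X t.-1 u != Y t.-1 u]].
Proof.
move=> _ _ _ _ vs X Y run v t t_gt0 vs_t XYt.
have [_ [nu [nu_opt nu_pos]]] := run t t_gt0; rewrite vs_t in nu nu_opt nu_pos *.
apply: contrapT => no_path.
set rel := fun c => _ || _ in no_path.
set W := rel_reach_set vbl rel v.
have split_X : splits_unsat pi vbl bad W (X t.-1) v.
  by move=> c unsat_c; apply: rel_reach_set_split; rewrite /rel unsat_c.
have split_Y : splits_unsat pi vbl bad W (Y t.-1) v.
  by move=> c unsat_c; apply: rel_reach_set_split; rewrite /rel unsat_c orbT.
have cond_X_gt0 := lt_le_trans nu_pos (opt_coupling_le_marginal_l nu_opt _ _).
have cond_Y_gt0 := lt_le_trans nu_pos (opt_coupling_le_marginal_r nu_opt _ _).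
have cond_XY := cond_eq_of_splits R (rel_reach_set_id vbl rel v)
  (rel_reach_set_agree no_path) split_X split_Y
  (condden_neq0 (lt0r_neq0 cond_X_gt0)) (condden_neq0 (lt0r_neq0 cond_Y_gt0)).
by rewrite (opt_coupling_offdiag_eq0 nu_opt cond_XY XYt) ltxx in nu_pos.
Qed.
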